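(* Let $T=(V,E,w)$ be a tree with an up-monotonic and rounded cost function, rooted at the vertex $r$ witnessing up-monotonicity, and let $f_{opt}$ be an optimal structured extended strategy function for $T$ (i.e., minimizing $\sup\bigcup_{u}f(u)$ among structured extended strategy functions). Let $L$ be a layer component, and let $L_1,\dots,L_k$ be the layer components directly below $L$, with $v_j=\mathrm{root}(L_j)$. Define $f'$ by $f'(u)=f_{opt}(u)$ if $u$ is a proper descendant of some $v_j$, and $f'(u)=f_{opt}(u)+w(L)$ for all other vertices $u$ (including the $v_j$ and all vertices of $L$). Then $f'$ is a structured extended strategy function for $T$.
   Context: $w$ is up-monotonic with respect to $r$: $w(u)\le w(v)$ whenever $v$ lies on the path from $r$ to $u$; rounded: every $w(u)$ is $2^j$ with $j$ a nonnegative integer. $T_u$ denotes the subtree of $u$ and its descendants. A layer is the set of all vertices of a given cost; a layer component is a connected component of the subgraph induced by a layer; $\mathrm{root}(L)$ is the vertex of $L$ closest to $r$; $w(L)$ is the common cost of its vertices; $L'$ is directly below $L$ if the parent of $\mathrm{root}(L')$ lies in $L$. Intervals are $[a,b)$ with integers $0\le a<b$, $|[a,b)|=b-a$; $[a,b)>[a',b')$ iff $a\ge b'$; $[a,b)+c=[a+c,b+c)$. An extended strategy function for $T$ is a map $f$ assigning to each vertex $u$ an interval $f(u)$ with $|f(u)|\ge w(u)$, such that for any distinct $v_1,v_2$ with $f(v_1)\cap f(v_2)\ne\emptyset$, the path between $v_1$ and $v_2$ contains a vertex $v_3$ with $f(v_3)>f(v_1)$ and $f(v_3)>f(v_2)$.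 It is structured if for every layer component $L$, with $u=\mathrm{root}(L)$, $f(u)>f(x)$ for every $x\in V(T_u)\setminus\{u\}$. *)

From mathcomp Require Import all_boot.
Set Implicit Arguments. Unset Strict Implicit. Unset Printing Implicit Defensive.

Section Defs.
Variables (V : finType) (e : rel V).

Definition spath (x : V) (p : seq V) (y : V) : Prop :=
  [/\ path e x p, last x p = y & uniq (x :: p)].

(* z lies on the (in a tree: unique) path between x and y *)
Definition on_path (x y z : V) : Prop :=
  exists p, spath x p y /\ z \in x :: p.

Definition is_tree : Prop :=
  [/\ symmetric e, irreflexive e,
      (forall x y, connect e x y) &
      (forall x p, path e x p -> uniq (x :: p) -> 2 <= size p ->
                   ~~ e (last x p) x)].

Variables (r : V) (w : V -> nat).

Definition up_monotonic : Prop :=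
  forall u v, on_path r u v -> w u <= w v.

Definition rounded : Prop := forall u, exists j, w u = 2 ^ j.

(* v is in T_u, i.e. u lies on the path from r to v *)
Definition in_subtree (u v : V) : Prop := on_path r v u.
Definition proper_desc (u v : V) : Prop := in_subtree u v /\ v <> u.

Definition parent (p u : V) : Prop := e p u /\ on_path r u p.

Definition layer_rel (c : nat) : rel V :=
  [rel a b | [&& e a b, w a == c & w b == c]].
Definition layer_comp (L : {set V}) : Prop :=
  exists2 x, x \in L & L = [set y | connect (layer_rel (w x)) x y].

Definition dist_le (x y x' y' : V) : Prop :=
  forall p q, spath x p y -> spath x' q y' -> size p <= size q.

Definition is_root (L : {set V}) (u : V) : Prop :=
  u \in L /\ forall x, x \in L -> dist_le r u r x.

Definition layer_cost (L : {set V}) : nat :=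
  if [pick x in L] is Some x then w x else 0.

Definition directly_below (L L' : {set V}) : Prop :=
  exists u p, is_root L' u /\ parent p u /\ p \in L.

(* intervals [a,b) as pairs (a,b) *)
Definition ilen (I : nat * nat) : nat := I.2 - I.1.
Definition imeet (I J : nat * nat) : bool := maxn I.1 J.1 < minn I.2 J.2.
Definition igt (I J : nat * nat) : bool := J.2 <= I.1.
Definition ishift (I : nat * nat) (c : nat) : nat * nat := (I.1 + c, I.2 + c).

Definition ext_strategy (f : V -> nat * nat) : Prop :=
  (forall u, (f u).1 < (f u).2 /\ w u <= ilen (f u)) /\
  (forall v1 v2, v1 <> v2 -> imeet (f v1) (f v2) ->
     exists v3, on_path v1 v2 v3 /\ igt (f v3) (f v1) /\ igt (f v3) (f v2)).

Definition structured (f : V -> nat * nat) : Prop :=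
  ext_strategy f /\
  forall L u, layer_comp L -> is_root L u ->
    forall x, in_subtree u x -> x <> u -> igt (f u) (f x).

(* sup of the union of all intervals *)
Definition scost (f : V -> nat * nat) : nat := \max_(u : V) (f u).2.

Definition optimal_structured (f : V -> nat * nat) : Prop :=
  structured f /\ forall g, structured g -> scost f <= scost g.

End Defs.

(* Let D be the set of proper descendants of the roots v_j: f' agrees with
   f_opt on D and is f_opt shifted by w(L) outside D.  Since D is closed under
   descendants and its complement is convex along tree paths, conflicts inside
   D and outside D are separated as for f_opt (shifted in the second case).
   For x in D and y outside D, the topmost root v_j above x lies outside D, on
   the path from x to y, and f_opt(v_j) > f_opt(x) because f_opt is
   structured; then v_j itself, or the f_opt-separator of v_j and y, separates
   x and y under f'. *)

From mathcomp Require Import all_boot zify.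
From Stdlib Require Import Classical.
Set Implicit Arguments. Unset Strict Implicit. Unset Printing Implicit Defensive.

Section Intervals.
Implicit Types I J K : nat * nat.

Lemma imeetC I J : imeet I J = imeet J I.
Proof. by rewrite /imeet maxnC minnC. Qed.

Lemma imeet_shift I J c : imeet (ishift I c) (ishift J c) = imeet I J.
Proof. by rewrite /imeet /= -addn_maxl -addn_minl ltn_add2r. Qed.

Lemma ilen_shift I c : ilen (ishift I c) = ilen I.
Proof. by rewrite /ilen /= subnDr. Qed.

Lemma igt_shift I J c : igt (ishift I c) (ishift J c) = igt I J.
Proof. by rewrite /igt /= leq_add2r. Qed.

Lemma igt_shiftl I J c : igt I J -> igt (ishift I c) J.
Proof. by rewrite /igt /=; lia. Qed.

Lemma igt_trans J I K : J.1 < J.2 -> igt I J -> igt J K -> igt I K.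
Proof. by rewrite /igt; lia. Qed.

Lemma igt_imeetF I J : igt I J -> imeet I J = false.
Proof. by rewrite /igt /imeet; lia. Qed.

Lemma imeetN_igt I J : I.1 < I.2 -> J.1 < J.2 -> ~~ imeet I J -> igt I J \/ igt J I.
Proof. by rewrite /igt /imeet; lia. Qed.

End Intervals.

Section TreePaths.
Variables (V : finType) (e : rel V).
Implicit Types (x y z a b : V) (p q : seq V).
Hypothesis e_sym : symmetric e.
Hypothesis e_connected : forall x y, connect e x y.
Hypothesis e_acyclic : forall x p, path e x p -> uniq (x :: p) -> 2 <= size p ->
  ~~ e (last x p) x.

Lemma path_rev_belast x p : path e x p -> path e (last x p) (rev (belast x p)).
Proof. by rewrite rev_path; apply: sub_path => a b /=; rewrite e_sym. Qed.

Lemma last_rev_belast x p y : last y (rev (belast x p)) = if p is [::] then y else x.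
Proof. by case: p => [|a p] //=; rewrite rev_cons last_rcons. Qed.

Lemma spath_rev x p y : spath e x p y ->
  exists q, spath e y q x /\ (x :: p) =i (y :: q).
Proof.
case=> Hp <- Hu; exists (rev (belast x p)); split; last first.
  by move=> z; rewrite -rev_rcons -lastI mem_rev.
split; first exact: path_rev_belast.
- by rewrite last_rev_belast; case: p {Hp Hu}.
- by rewrite -rev_rcons -lastI rev_uniq.
Qed.

Lemma spath_exists x y : exists p, spath e x p y.
Proof.
have /connectP [p /shortenP [q Hq Uq _] ->] := e_connected x y.
by exists q.
Qed.

Lemma spath_split x p y z : spath e x p y -> z \in x :: p ->
  exists p1 p2, [/\ p = p1 ++ p2, spath e x p1 z & spath e z p2 y].
Proof.
case=> + + + Hz; case/splitPl: Hz => p1 p2 Ez.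
rewrite cat_path last_cat Ez -cat_cons cat_uniq => /andP[P1 P2] Ly /and3P[U1 D12 U2].
exists p1, p2; split=> //; split=> //=; rewrite U2 andbT.
apply: contra D12 => z2; apply/hasP; exists z => //.
by rewrite -Ez mem_last.
Qed.

(* Otherwise [x :: a :: p] followed by the reversal of [b :: q] is a cycle. *)
Lemma fork_meets_early x a p b q :
  path e x (a :: p) -> uniq (x :: a :: p) -> path e x (b :: q) -> uniq (x :: b :: q) ->
  last a p = last b q -> a != b ->
  has (fun z => (z \in b :: q) && (z != last a p)) (a :: p).
Proof.
move=> Pp Up /andP[exb Pq] Uq Ly Nab; apply/negPn/negP => disj.
have := Uq; rewrite [b :: q]lastI -Ly /= mem_rcons in_cons negb_or rcons_uniq.
case/and3P=> /andP[_ xb] ybq Ubq.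
set c := a :: p ++ rev (belast b q).
have Pc : path e x c by rewrite /c -cat_cons cat_path Pp /= Ly path_rev_belast.
have Uc : uniq (x :: c).
  rewrite /c -cat_cons -cat_cons cat_uniq Up rev_uniq Ubq andbT.
  apply/hasP => -[z]; rewrite mem_rev => zbq; rewrite in_cons => /orP[/eqP zx|zp].
    by move: xb; rewrite -zx zbq.
  move/hasP: disj; apply; exists z => //; rewrite (mem_belast zbq).
  by apply: contraNneq ybq => <-.
have Sc : 2 <= size c.
  rewrite /c /= size_cat size_rev size_belast ltnS.
  by case: (p) (q) Ly Nab => [|? ?] [|? ?] //= -> /eqP.
have Lc : last x c = b.
  rewrite /c -cat_cons last_cat last_rev_belast.
  by case: (q) Ly => //= <-.
by move: (e_acyclic Pc Uc Sc); rewrite Lc e_sym exb.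
Qed.

Lemma spath_uniq x p q y : spath e x p y -> spath e x q y -> p = q.
Proof.
have [n] := ubnP (size p + size q); elim: n x p q y => // n IH x p q y lt_pq.
case: p lt_pq => [|a p] lt_pq [Pp Lp Up] [Pq Lq Uq].
  case: q Pq Lq Uq {lt_pq} => //= b q _ Lq /andP[/negP []].
  by rewrite /= in Lp; rewrite Lp -Lq mem_last.
case: q lt_pq Pq Lq Uq => [|b q] lt_pq Pq Lq Uq.
  by case/andP: Up => /negP []; rewrite /= in Lp Lq; rewrite Lq -Lp mem_last.
have [Eab|Nab] := eqVneq a b.
  subst b; congr (_ :: _); apply: (IH a p q y).
  - by move: lt_pq; rewrite /= addnS; lia.
  - by split; [case/andP: Pp | exact: Lp | case/andP: Up].
  - by split; [case/andP: Pq | exact: Lq | case/andP: Uq].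
have /hasP [z zp /andP [zq zy]] :=
  fork_meets_early Pp Up Pq Uq (etrans Lp (esym Lq)) Nab.
have [p1 [p2 [Ep S1 S2]]] :=
  spath_split (And3 Pp Lp Up) (mem_behead (s := x :: a :: p) zp).
have [q1 [q2 [Eq T1 T2]]] :=
  spath_split (And3 Pq Lq Uq) (mem_behead (s := x :: b :: q) zq).
have nonempty s : spath e z s y -> 0 < size s.
  by case: s => // -[_ /= Ezy _]; move: zy; rewrite Ezy -Lp eqxx.
have E1 : p1 = q1.
  apply: (IH x p1 q1 z) => //; move: lt_pq (nonempty _ S2) (nonempty _ T2).
  by rewrite Ep Eq !size_cat; lia.
case: p1 Ep E1 S1 => [|a1 p1] Ep E1 [_ Ezx _].
  by case/andP: Up => /negP []; rewrite /= in Ezx; rewrite Ezx.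
by move: Ep Eq Nab; rewrite -E1 => -[-> _] [-> _]; rewrite eqxx.
Qed.

Lemma on_path_spath x y z p : on_path e x y z -> spath e x p y -> z \in x :: p.
Proof. by case=> q [Sq zq] Sp; rewrite (spath_uniq Sp Sq). Qed.

Lemma on_path_walk x y z p : on_path e x y z -> path e x p -> last x p = y ->
  z \in x :: p.
Proof.
move=> zxy /shortenP [q Pq Uq sub_qp] Lq.
have := on_path_spath zxy (And3 Pq Lq Uq).
by rewrite !in_cons => /orP[-> // | /sub_qp ->]; rewrite orbT.
Qed.

Lemma on_path_sym x y z : on_path e x y z -> on_path e y x z.
Proof.
case=> p [Sp zp]; have [q [Sq Epq]] := spath_rev Sp.
by exists q; rewrite -Epq.
Qed.

Lemma on_path_trans x y z v : on_path e x y z -> on_path e z y v -> on_path e x y v.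
Proof.
case=> p [Sp zp] vzy; have [p1 [p2 [Ep S1 S2]]] := spath_split Sp zp; subst p.
exists (p1 ++ p2); split=> //; move: (on_path_spath vzy S2).
rewrite -cat_cons mem_cat in_cons => /orP[/eqP-> | ->]; last by rewrite orbT.
by case: S1 => _ <- _; rewrite mem_last.
Qed.

Lemma on_path_prefix x y z v : on_path e x y z -> on_path e x z v -> on_path e x y v.
Proof.
case=> p [Sp zp] vxz; have [p1 [p2 [Ep S1 _]]] := spath_split Sp zp; subst p.
by exists (p1 ++ p2); split=> //; rewrite -cat_cons mem_cat (on_path_spath vxz S1).
Qed.

Lemma on_path_antisym x u v : on_path e x u v -> on_path e x v u -> u = v.
Proof.
case=> p [Sp vp] uxv; have [p1 [p2 [Ep S1 [_ L2 _]]]] := spath_split Sp vp.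
have up1 := on_path_spath uxv S1.
case: p2 Ep L2 => [|a p2] Ep /= L2; first by rewrite L2.
case: Sp => _ _; rewrite Ep -cat_cons cat_uniq => /and3P[_ /hasP disjoint _].
by case: disjoint; exists u => //; rewrite -L2 mem_last.
Qed.

Variable r : V.

Lemma proper_desc_trans v u x :
  proper_desc e r v u -> proper_desc e r u x -> proper_desc e r v x.
Proof.
move=> [vu Nuv] [ux Nxu]; split; first exact: on_path_prefix ux vu.
by move=> Exv; subst x; apply: Nuv; apply: on_path_antisym vu ux.
Qed.

Lemma proper_desc_shorter v u p : proper_desc e r v u -> spath e r p u ->
  exists2 p1, spath e r p1 v & size p1 < size p.
Proof.
case=> vu Nuv Sp.
have [p1 [p2 [Ep S1 [_ L2 _]]]] := spath_split Sp (on_path_spath vu Sp).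
subst p; exists p1 => //; rewrite size_cat -[X in X < _]addn0 ltn_add2l lt0n size_eq0.
by apply/eqP => p2_nil; apply: Nuv; rewrite -L2 p2_nil.
Qed.

Lemma ancestor_on_walk v x y p : proper_desc e r v y -> ~ proper_desc e r v x ->
  path e x p -> last x p = y -> v \in x :: p.
Proof.
case=> vy _ Nvx Pp Lp; have [xv | Nxv] := eqVneq x v; first by rewrite xv mem_head.
have [q [Pq Lq Uq]] := spath_exists r x.
have : v \in r :: q ++ p.
  by apply: on_path_walk vy _ _; rewrite ?cat_path ?last_cat Lq ?Pq.
rewrite -cat_cons mem_cat => /orP[vq | vp]; last by rewrite in_cons vp orbT.
by case: Nvx; split; [exists q | apply/eqP].
Qed.

Lemma proper_desc_on_path v x y :
  proper_desc e r v x -> ~ proper_desc e r v y -> on_path e x y v.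
Proof.
move=> vx Nvy; have [p [Pp Lp Up]] := spath_exists y x.
by apply: on_path_sym; exists p; split; last exact: ancestor_on_walk vx Nvy Pp Lp.
Qed.

Lemma proper_desc_path_closed v x y z :
  ~ proper_desc e r v x -> ~ proper_desc e r v y -> on_path e x y z ->
  ~ proper_desc e r v z.
Proof.
move=> Nvx Nvy [p [Sp zp]] vz; have [p1 [p2 [Ep S1 S2]]] := spath_split Sp zp.
have [q [[Pq Lq _] Epq]] := spath_rev S2.
have v_p1 : v \in x :: p1 by case: S1 => P1 L1 _; apply: ancestor_on_walk vz Nvx P1 L1.
have : v \in z :: p2 by rewrite Epq; apply: ancestor_on_walk vz Nvy Pq Lq.
rewrite in_cons => /orP[/eqP vz_eq | v_p2]; first by case: vz => _; rewrite vz_eq.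
case: Sp => _ _; rewrite Ep -cat_cons cat_uniq => /and3P[_ /hasP disjoint _].
by case: disjoint; exists v.
Qed.

Section BelowRoots.
Variable roots : V -> Prop.

Definition below_roots x := exists2 v, roots v & proper_desc e r v x.

Lemma below_roots_desc u x : below_roots u -> proper_desc e r u x -> below_roots x.
Proof. by case=> v Rv vu ux; exists v => //; apply: proper_desc_trans vu ux. Qed.

Lemma below_roots_path_closed x y z :
  ~ below_roots x -> ~ below_roots y -> on_path e x y z -> ~ below_roots z.
Proof.
move=> Nx Ny zxy [v Rv vz]; apply: proper_desc_path_closed zxy vz.
- by move=> vx; apply: Nx; exists v.
- by move=> vy; apply: Ny; exists v.
Qed.

Lemma topmost_root x : below_roots x ->
  exists2 v, roots v /\ ~ below_roots v & proper_desc e r v x.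
Proof.
case=> v Rv vx; have [p Sp] := spath_exists r v.
have [n] := ubnP (size p); elim: n v p Rv vx Sp => // n IH v p Rv vx Sp lt_pn.
have [[u Ru uv] | Nv] := classic (below_roots v); last by exists v.
have [q Sq lt_qp] := proper_desc_shorter uv Sp.
exact: IH Ru (proper_desc_trans uv vx) Sq (leq_trans lt_qp lt_pn).
Qed.

Lemma below_roots_separated (f : V -> nat * nat) x y :
  (forall v u, roots v -> proper_desc e r v u -> igt (f v) (f u)) ->
  below_roots x -> ~ below_roots y ->
  exists v, [/\ on_path e x y v, ~ below_roots v & igt (f v) (f x)].
Proof.
move=> root_dominates /topmost_root [v [Rv Nv] vx] Ny.
exists v; split=> //; last exact: root_dominates.
by apply: proper_desc_on_path vx _ => vy; apply: Ny; exists v.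
Qed.

End BelowRoots.

Section Shift.
Variables (w : V -> nat) (f f' : V -> nat * nat) (D : V -> Prop) (c : nat).
Hypothesis f'_in : forall u, D u -> f' u = f u.
Hypothesis f'_out : forall u, ~ D u -> f' u = ishift (f u) c.
Hypothesis D_separated : forall x y, D x -> ~ D y ->
  exists v, [/\ on_path e x y v, ~ D v & igt (f v) (f x)].
Hypothesis outside_D_path_closed : forall x y z,
  ~ D x -> ~ D y -> on_path e x y z -> ~ D z.

Lemma igt_f'l u I : igt (f u) I -> igt (f' u) I.
Proof. by have [/f'_in-> | /f'_out->] := classic (D u); last apply: igt_shiftl. Qed.

Lemma shift_mixed_pair x y : ext_strategy e w f -> D x -> ~ D y ->
  imeet (f' x) (f' y) ->
  exists z, on_path e x y z /\ igt (f' z) (f' x) /\ igt (f' z) (f' y).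
Proof.
move=> [f_valid f_sep] Dx Ny; rewrite (f'_in Dx) (f'_out Ny) => meet_xy.
have [v [vxy Nv fv_fx]] := D_separated Dx Ny.
have [yv | Nyv] := eqVneq y v.
  by move: meet_xy; rewrite yv imeetC igt_imeetF // igt_shiftl.
have [meet_vy | disj_vy] := boolP (imeet (f v) (f y)).
  have Nvy : v <> y by apply/eqP; rewrite eq_sym.
  have [z [zvy [fz_fv fz_fy]]] := f_sep v y Nvy meet_vy.
  exists z; rewrite (f'_out (outside_D_path_closed Nv Ny zvy)); split.
    exact: on_path_trans vxy zvy.
  split; last by rewrite igt_shift.
  by apply/igt_shiftl/(igt_trans (f_valid v).1 fz_fv).
have [fv_fy | fy_fv] := imeetN_igt (f_valid v).1 (f_valid y).1 disj_vy.
  exists v; rewrite (f'_out Nv) igt_shift; split=> //.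
  by split=> //; apply: igt_shiftl.
move: meet_xy; rewrite imeetC igt_imeetF //.
exact/igt_shiftl/(igt_trans (f_valid v).1 fy_fv).
Qed.

Lemma ext_strategy_shift : ext_strategy e w f -> ext_strategy e w f'.
Proof.
move=> f_strategy; have [f_valid f_sep] := f_strategy.
split=> [u | x y Nxy].
  move: (f_valid u); have [/f'_in-> // | /f'_out->] := classic (D u).
  by rewrite ilen_shift /= ltn_add2r.
have [Dx | Nx] := classic (D x); have [Dy | Ny] := classic (D y).
- rewrite !f'_in // => /(f_sep x y Nxy) [z [zxy [fz_fx fz_fy]]].
  by exists z; split=> //; split; apply: igt_f'l.
- exact: shift_mixed_pair.
- rewrite imeetC => /(shift_mixed_pair f_strategy Dy Nx) [z [zyx [fz_fy fz_fx]]].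
  by exists z; split; [apply: on_path_sym | split].
- rewrite !f'_out // imeet_shift => /(f_sep x y Nxy) [z [zxy [fz_fx fz_fy]]].
  exists z; rewrite f'_out; last exact: outside_D_path_closed zxy.
  by rewrite !igt_shift.
Qed.

Lemma structured_shift : (forall u x, D u -> proper_desc e r u x -> D x) ->
  structured e r w f -> structured e r w f'.
Proof.
move=> D_desc [f_strategy f_root]; split; first exact: ext_strategy_shift.
move=> L u HL Hu x ux Nxu; have fu_fx := f_root L u HL Hu x ux Nxu.
have [Du | Nu] := classic (D u).
  have Dx : D x by apply: D_desc Du (conj ux Nxu).
  by rewrite !f'_in.
rewrite (f'_out Nu); have [/f'_in-> | /f'_out->] := classic (D x).
  exact: igt_shiftl.
by rewrite igt_shift.
Qed.

End Shift.
End TreePaths.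

Theorem mainTheorem18 (V : finType) (e : rel V) (r : V) (w : V -> nat)
    (fopt : V -> nat * nat) (L : {set V}) (f' : V -> nat * nat) :
  is_tree e -> up_monotonic e r w -> rounded w ->
  optimal_structured e r w fopt ->
  layer_comp e w L ->
  (forall u,
     (exists L' v, layer_comp e w L' /\ directly_below e r L L' /\
                   is_root e r L' v /\ proper_desc e r v u) ->
     f' u = fopt u) ->
  (forall u,
     ~ (exists L' v, layer_comp e w L' /\ directly_below e r L L' /\
                     is_root e r L' v /\ proper_desc e r v u) ->
     f' u = ishift (fopt u) (layer_cost w L)) ->
  structured e r w f'.
Proof.
move=> [e_sym _ e_connected e_acyclic] _ _ [fopt_structured _] _ f'_below f'_above.
pose roots v := exists L',
  [/\ layer_comp e w L', directly_below e r L L' & is_root e r L' v].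
have root_dominates v x : roots v -> proper_desc e r v x -> igt (fopt v) (fopt x).
  by move=> [L' [HL _ Hv]] [vx Nxv]; apply: fopt_structured.2 HL Hv x vx Nxv.
apply: (structured_shift e_sym e_acyclic (D := below_roots e r roots)) fopt_structured.
- by move=> u [v [L' [HL HLL' Hv]] vu]; apply: f'_below; exists L', v.
- move=> u Nu; apply: f'_above => -[L' [v [HL [HLL' [Hv vu]]]]].
  by apply: Nu; exists v => //; exists L'.
- by move=> x y; apply: below_roots_separated.
- exact: below_roots_path_closed.
- exact: below_roots_desc.
Qed.
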